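(* Let $p\geq2$, $n_1,\dots,n_l\geq1$ be integers with $\sum_j p^{-n_j}=1$ and let $T_p$ be the map satisfying Condition 1 with slopes $\Lambda_j=p^{n_j}$. Let $U$ be a quantization of $T_p$ acting on $\mathcal H_\Bbbk\cong\mathbb C^{N_\Bbbk}$ with $N_\Bbbk=p^\Bbbk$ (with respect to the partition of $[0,1]$ into $p^\Bbbk$ equal intervals), and set $n_{\mathrm E}=\lfloor\log N_\Bbbk/\log\Lambda_{\max}\rfloor$, $\Lambda_{\max}=\max_j\Lambda_j$. Then for every base-$p$ cylinder $[\![\mathrm x]\!]$ of length $|\mathrm x|=m$, $$U^{-n}P_{[\![\mathrm x]\!]}U^n=P_{T_p^{-n}[\![\mathrm x]\!]}\qquad\text{for all } n \text{ with } n+m\leq n_{\mathrm E}.$$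
   Context: Condition 1: $[0,1]$ is divided into consecutive intervals $I_1,\dots,I_l$ with $|I_j|=\Lambda_j^{-1}$, and $T_p$ is affine with slope $\Lambda_j$ on $I_j$ mapping $I_j$ onto $[0,1]$ (so $T_p(x)=p^{n_j}x\bmod 1$ on $I_j$). For a word $\mathrm x=\mathrm x_1\dots\mathrm x_m$ over $\{0,\dots,p-1\}$, $[\![\mathrm x]\!]$ is the interval of points whose first $m$ base-$p$ digits are $\mathrm x_1,\dots,\mathrm x_m$. Let $E_i=[(i-1)p^{-\Bbbk},ip^{-\Bbbk}]$; with $B(i,j)=|E_i\cap T_p^{-1}E_j|/|E_i|$, a quantization is a unitary matrix $U$ with $B(j,i)=|U(i,j)|^2$ for all $i,j$. For a finite union $Y$ of intervals $E_i$, $P_Y$ is the diagonal matrix with entry $1$ at $i$ if $E_i\subseteq Y$ and $0$ otherwise (i.e. $P_Y=\mathrm{Op}(\chi_Y)$, the diagonal matrix of averages of $\chi_Y$ over the $E_i$). *)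

From HB Require Import structures.
From mathcomp Require Import all_boot all_order all_algebra.
From mathcomp Require Import all_classical all_reals all_analysis.
From mathcomp Require Import complex.
Set Implicit Arguments. Unset Strict Implicit. Unset Printing Implicit Defensive.
Import Order.TTheory GRing.Theory Num.Theory.
Local Open Scope classical_set_scope.
Local Open Scope ring_scope.
Local Open Scope complex_scope.

Section Defs.
Variable R : realType.

Definition lenR (A : set R) : R := fine (lebesgue_measure A).

(* left endpoint a_j of the j-th interval I_j = [a_j, a_j + p^{-n_j}] *)
Definition branch_start (p l : nat) (ns : 'I_l -> nat) (j : 'I_l) : R :=
  \sum_(i < l | (i < j)%N) (p%:R ^- ns i).

(* Condition 1: T is affine with slope p^{n_j} mapping I_j onto [0,1]
   (prescribed on the interior of each I_j; endpoints form a null set) *)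
Definition condition1 (p l : nat) (ns : 'I_l -> nat) (T : R -> R) : Prop :=
  forall (j : 'I_l) (x : R),
    branch_start p ns j < x < branch_start p ns j + p%:R ^- ns j ->
    T x = p%:R ^+ ns j * (x - branch_start p ns j).

(* E_i, 0-indexed: E_i = [i p^{-k}, (i+1) p^{-k}] for i < p^k *)
Definition Ecell (p k : nat) (i : 'I_(p ^ k)) : set R :=
  `[ (i%:R / p%:R ^+ k), ((i.+1)%:R / p%:R ^+ k) ]%classic.

Definition Bmat (p k : nat) (T : R -> R) (i j : 'I_(p ^ k)) : R :=
  lenR (Ecell i `&` T @^-1` Ecell j) / lenR (Ecell i).

Definition unitary_mx (N : nat) (U : 'M[R[i]]_N) : Prop :=
  U *m (map_mx conjc U)^T = 1%:M.

Definition is_quantization (p k : nat) (T : R -> R) (U : 'M[R[i]]_(p ^ k)) : Prop :=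
  unitary_mx U /\
  forall i j : 'I_(p ^ k), (Bmat T j i)%:C = `|U i j| ^+ 2.

(* base-p cylinder [[x]]: points whose first m = size x base-p digits are x *)
Definition cylinder (p : nat) (x : seq 'I_p) : set R :=
  let c : R := \sum_(i < size x) (nth 0%N [seq val d | d <- x] i)%:R * p%:R ^- i.+1 in
  `[ c, (c + p%:R ^- size x) [%classic.

(* P_Y = Op(chi_Y): diagonal matrix of the averages of chi_Y over the E_i *)
Definition Pop (p k : nat) (Y : set R) : 'M[R[i]]_(p ^ k) :=
  diag_mx (\row_i ((lenR (Ecell i `&` Y) / lenR (Ecell i))%:C)).

Definition nE (p k l : nat) (ns : 'I_l -> nat) : int :=
  Num.floor (ln ((p ^ k)%:R : R) / ln ((\max_(j < l) p ^ ns j)%:R)).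

End Defs.

Arguments condition1 {R} p {l} ns T.
Arguments is_quantization {R} p k T U.
Arguments Pop {R} p k Y.
Arguments cylinder {R} p x.
Arguments nE R p k {l} ns.

(* A set [Y] is cell-invariant of level [q] if, off a finite exceptional set,
   membership in [Y] only depends on the first [q] base-[p] digits.  A cylinder
   of length [m] is cell-invariant of level [m], and since each branch of [T] is
   affine of slope [p^(n_j)] <= [p^M] and starts at a point with at most [M]
   digits, [T @^-1` Y] is cell-invariant of level [q + M].  When [q + M <= k],
   both [Y] and [T @^-1` Y] are unions of cells [E_i] up to null sets, and
   [U i j != 0] forces [E_j] and [T @^-1` E_i] to overlap in positive measure,
   so [E_i] lies in [Y] exactly when [E_j] lies in [T @^-1` Y]; unitarity of
   [U] then gives [U^* P_Y U = P_(T^-1 Y)].  Iterating [n] times needs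
   [m + n M <= k], which is what [n + m <= n_E] provides. *)

From HB Require Import structures.
From mathcomp Require Import all_boot all_order all_algebra.
From mathcomp Require Import all_classical all_reals all_analysis.
From mathcomp Require Import complex.
Set Implicit Arguments. Unset Strict Implicit. Unset Printing Implicit Defensive.
Import Order.TTheory GRing.Theory Num.Theory.
Local Open Scope classical_set_scope.
Local Open Scope ring_scope.

Section LebesgueInterval.
Variable R : realType.
Implicit Types (a b : R) (F : seq R) (S : set R).

Lemma lebesgue_measure_seq0 F : lebesgue_measure [set` F] = 0%E.
Proof. exact/countable_lebesgue_measure0/finite_set_countable/finite_seq. Qed.

Lemma lebesgue_measure_itvI_null a b F S :
  (forall y, a < y < b -> y \notin F -> ~ S y) ->
  lebesgue_measure (`[a, b] `&` S) = 0%E.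
Proof.
move=> notS; apply/le_anti; rewrite measure_ge0 andbT.
rewrite -(lebesgue_measure_seq0 [:: a, b & F]); apply: le_outer_measure.
move=> y [/=]; rewrite in_itv /= => /andP[ay yb] Sy; rewrite /= !in_cons.
apply/negPn/negP; rewrite !negb_or => /and3P[ya yb' yF].
by apply: (notS y _ yF Sy); rewrite !lt_def ay yb ya eq_sym yb'.
Qed.

Lemma lenR_itvI_witness a b S F : lenR (`[a, b] `&` S) != 0 ->
  exists y, [/\ a < y < b, y \notin F & S y].
Proof.
apply: contraNP => noy; rewrite /lenR (@lebesgue_measure_itvI_null a b F) //.
by move=> y aby yF Sy; apply: noy; exists y.
Qed.

Lemma lebesgue_measure_itv_le (x y : bool) a b : a <= b ->
  lebesgue_measure [set` Interval (BSide x a) (BSide y b)] = (b - a)%:E.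
Proof.
rewrite le_eqVlt lebesgue_measure_itv /= lte_fin => /predU1P[->|->].
  by rewrite ltxx subrr.
by rewrite EFinB.
Qed.

Lemma lenR_itvI_const a b F S (P : Prop) : a <= b ->
  (forall y, a < y < b -> y \notin F -> (S y <-> P)) ->
  lenR (`[a, b] `&` S) = `[< P >]%:R * (b - a).
Proof.
move=> ab SP; case: (asboolP P) => HP; last first.
  rewrite mul0r /lenR (@lebesgue_measure_itvI_null a b F) //.
  by move=> y aby yF /(SP y aby yF).
rewrite mul1r /lenR; suff -> : lebesgue_measure (`[a, b] `&` S) = (b - a)%:E by [].
apply/le_anti/andP; split.
  rewrite -(@lebesgue_measure_itv_le true false a b ab).
  by apply: le_outer_measure; apply: subIsetl.
rewrite -(@lebesgue_measure_itv_le false true a b ab) -[leRHS]adde0.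
rewrite -(lebesgue_measure_seq0 F); apply: le_trans (outer_measureU2 _ _ _).
apply: le_outer_measure => y /=; rewrite in_itv /= => /andP[ay yb].
have [yF|yF] := boolP (y \in F); [by right | left].
by split; [rewrite /= in_itv /= !ltW | apply/(SP y _ yF) => //; rewrite ay].
Qed.

End LebesgueInterval.

Section UnitaryConjugation.
Variables (R : realType) (N : nat) (U : 'M[R[i]]_N).
Hypothesis U_unitary : unitary_mx U.
Local Notation Ustar := ((map_mx conjc U)^T).

Lemma unitary_mxC : Ustar *m U = 1%:M.
Proof. exact: mulmx1C U_unitary. Qed.

Lemma invmx_unitaryX n : invmx (U ^+ n) = Ustar ^+ n.
Proof.
have UUstar : U ^+ n *m Ustar ^+ n = 1%:M.
  rewrite mulmxE -exprMn_comm; first by rewrite -mulmxE U_unitary expr1n.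
  by rewrite /GRing.comm -!mulmxE U_unitary unitary_mxC.
have [Un_unit _] := mulmx1_unit UUstar.
by rewrite -[RHS]mul1mx -(mulVmx Un_unit) -mulmxA UUstar mulmx1.
Qed.

Lemma unitary_conj_diag_mx (v w : 'I_N -> R[i]) :
  (forall i j, U i j != 0 -> v i = w j) ->
  Ustar *m diag_mx (\row_i v i) *m U = diag_mx (\row_i w i).
Proof.
move=> vw; apply/matrixP => a b; rewrite mul_mx_diag !mxE.
transitivity (\sum_i Ustar a i * U i b * w b).
  apply: eq_bigr => i _; rewrite !mxE.
  have [->|Uib] := eqVneq (U i b) 0; first by rewrite !mulr0 mul0r.
  by rewrite (vw _ _ Uib) mulrAC.
rewrite -mulr_suml; have := congr1 (fun A : 'M[R[i]]_N => A a b) unitary_mxC.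
by rewrite !mxE => ->; case: eqVneq => [->|]; rewrite ?mulr1n ?mulr0n ?mul1r ?mul0r.
Qed.

End UnitaryConjugation.

Section PadicCells.
Variables (R : realType) (p : nat).
Hypothesis p_gt1 : (1 < p)%N.
Local Notation P := (p%:R : R).

Lemma natp_gt0 : 0 < P.
Proof. by rewrite ltr0n ltnW. Qed.

Lemma natpX_gt0 q : 0 < P ^+ q.
Proof. exact/exprn_gt0/natp_gt0. Qed.

Definition in_cell (q c : nat) (z : R) := c%:R <= z * P ^+ q < c.+1%:R.

Lemma in_cell_ge0 q c z : in_cell q c z -> 0 <= z.
Proof.
by case/andP => + _; rewrite -(pmulr_lge0 _ (natpX_gt0 q)); apply: le_trans.
Qed.

Lemma in_cell_itv q c z : c%:R / P ^+ q < z < c.+1%:R / P ^+ q -> in_cell q c z.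
Proof.
case/andP => h1 h2; rewrite /in_cell -ler_pdivrMr ?natpX_gt0 // ltW //=.
by rewrite -ltr_pdivlMr ?natpX_gt0.
Qed.

Lemma in_cell_coarsen q Q c z : (q <= Q)%N ->
  in_cell Q c z -> in_cell q (c %/ p ^ (Q - q)) z.
Proof.
move=> qQ; rewrite /in_cell; set d := (p ^ (Q - q))%N.
have d_gt0 : 0 < d%:R :> R by rewrite ltr0n expn_gt0 ltnW.
have -> : z * P ^+ Q = z * P ^+ q * d%:R by rewrite natrX -mulrA -exprD subnKC.
case/andP => h1 h2; apply/andP; split.
  rewrite -(ler_pM2r d_gt0); apply: le_trans h1; rewrite -natrM ler_nat.
  exact: leq_divM.
rewrite -(ltr_pM2r d_gt0); apply: lt_le_trans h2 _; rewrite -natrM ler_nat.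
by rewrite ltn_ceil // expn_gt0 ltnW.
Qed.

Lemma in_cell_affine Q n c a (s z : R) : (n <= Q)%N -> s * P ^+ Q = a%:R ->
  s <= z -> in_cell Q c z -> in_cell (Q - n) (c - a) (P ^+ n * (z - s)).
Proof.
move=> nQ Ea sz /andP[cz zc]; rewrite /in_cell.
have -> : P ^+ n * (z - s) * P ^+ (Q - n) = z * P ^+ Q - a%:R.
  by rewrite mulrC mulrA -exprD subnK // mulrC mulrBl Ea.
have ac : (a <= c)%N.
  rewrite -ltnS -(ltr_nat R) -Ea; apply: le_lt_trans zc.
  by rewrite ler_pM2r ?natpX_gt0.
by rewrite natrB // -(subSn ac) natrB ?leqW // lerD2r ltrD2r cz zc.
Qed.

(* [z < 1]: the branches of [T] only cover [[0, 1)] *)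
Definition cell_invariant (q : nat) (Y : set R) (F : seq R) :=
  forall c z w, in_cell q c z -> in_cell q c w -> z < 1 ->
    z \notin F -> w \notin F -> (Y z <-> Y w).

Lemma cell_invariantW q Y F G : {subset F <= G} ->
  cell_invariant q Y F -> cell_invariant q Y G.
Proof.
move=> FG Yinv c z w zc wc z1 zG wG.
by apply: (Yinv c) => //; [exact: contra (FG z) zG | exact: contra (FG w) wG].
Qed.

Lemma cell_width k (i : nat) : i.+1%:R / P ^+ k - i%:R / P ^+ k = (P ^+ k)^-1.
Proof. by rewrite -mulrBl -addn1 natrD addrAC subrr add0r mul1r. Qed.

Lemma cell_le k (i : nat) : i%:R / P ^+ k <= i.+1%:R / P ^+ k.
Proof. by rewrite ler_pM2r ?invr_gt0 ?natpX_gt0 // ler_nat. Qed.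

Lemma Ecell_interior_lt1 k (i : 'I_(p ^ k)) z :
  i%:R / P ^+ k < z < i.+1%:R / P ^+ k -> z < 1.
Proof.
case/andP => _ /lt_le_trans; apply.
by rewrite ler_pdivrMr ?natpX_gt0 // mul1r -natrX ler_nat.
Qed.

Lemma lenR_Ecell k (i : 'I_(p ^ k)) : lenR (Ecell i) = (P ^+ k)^-1.
Proof.
by rewrite /lenR /Ecell (@lebesgue_measure_itv_le _ true false) ?cell_le // cell_width.
Qed.

Lemma lenR_EcellI_invariant q Y F k (i : 'I_(p ^ k)) z :
  cell_invariant q Y F -> (q <= k)%N ->
  i%:R / P ^+ k < z < i.+1%:R / P ^+ k -> z \notin F ->
  lenR (Ecell i `&` Y) = `[< Y z >]%:R / P ^+ k.
Proof.
move=> Yinv qk zi zF; rewrite (@lenR_itvI_const _ _ _ F _ (Y z)) ?cell_le ?cell_width //.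
have cell_i u : i%:R / P ^+ k < u < i.+1%:R / P ^+ k ->
    in_cell q (i %/ p ^ (k - q)) u by move/in_cell_itv; apply: in_cell_coarsen.
move=> y yi yF; symmetry.
exact: (Yinv _ _ _ (cell_i z zi) (cell_i y yi) (Ecell_interior_lt1 zi)).
Qed.

Section Cylinders.
Variable x : seq 'I_p.

Definition cylinder_index : nat :=
  \sum_(i < size x) nth 0%N [seq val d | d <- x] i * p ^ (size x - i.+1).

Lemma in_cell_cylinder c z :
  in_cell (size x) c z -> (cylinder p x z <-> c = cylinder_index).
Proof.
set m := size x; have Pm := natpX_gt0 m.
set s : R := \sum_(i < m) (nth 0%N [seq val d | d <- x] i)%:R * P ^- i.+1.
have s_nat : s * P ^+ m = cylinder_index%:R.
  rewrite mulr_suml natr_sum; apply: eq_bigr => i _.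
  rewrite natrM natrX -mulrA; congr (_ * _).
  rewrite -[in P ^+ m](subnK (ltn_ord i)) exprD mulrCA.
  by rewrite mulVf ?mulr1 // gt_eqF ?natpX_gt0.
move=> /andP[cz zc]; rewrite /cylinder /= in_itv /= -/m -/s.
rewrite -(ler_pM2r Pm) -(ltr_pM2r Pm) mulrDl mulVf ?gt_eqF // s_nat natr1.
split=> [/andP[sz zs]|<-]; last by rewrite cz zc.
apply/eqP; rewrite eqn_leq -ltnS -(ltr_nat R) (le_lt_trans cz zs) /=.
by rewrite -ltnS -(ltr_nat R) (le_lt_trans sz zc).
Qed.

Lemma cylinder_cell_invariant : cell_invariant (size x) (cylinder p x) [::].
Proof.
by move=> c z w zc wc _ _ _; rewrite (in_cell_cylinder zc) (in_cell_cylinder wc).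
Qed.

End Cylinders.

Section Branches.
Variables (l : nat) (ns : 'I_l -> nat).

Definition bstart (t : nat) : R := \sum_(i < l | (i < t)%N) P ^- ns i.

Lemma bstart0 : bstart 0 = 0.
Proof. by rewrite /bstart big_pred0. Qed.

Lemma bstart_total : bstart l = \sum_(j < l) P ^- ns j.
Proof. by apply: eq_bigl => i; rewrite ltn_ord. Qed.

Lemma bstartS (j : 'I_l) : bstart j.+1 = bstart j + P ^- ns j.
Proof.
rewrite /bstart (bigD1 j) //= addrC; congr (_ + _).
by apply: eq_bigl => i; rewrite ltnS ltn_neqAle andbC.
Qed.

Lemma bstart_nat Q t : (forall i, ns i <= Q)%N ->
  bstart t * P ^+ Q = (\sum_(i < l | (i < t)%N) p ^ (Q - ns i))%N%:R.
Proof.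
move=> nsQ; rewrite mulr_suml natr_sum; apply: eq_bigr => i _.
rewrite natrX -(subnK (nsQ i)) exprD mulrA mulrC mulrA subnK //.
by rewrite mulfV ?mul1r // gt_eqF ?natpX_gt0.
Qed.

Lemma bstart_between z : 0 <= z -> z < bstart l ->
  (forall t, (t <= l)%N -> z != bstart t) ->
  exists j : 'I_l, bstart j < z < bstart j.+1.
Proof.
move=> z_ge0 zl z_neq; suff: forall t, (t <= l)%N -> z < bstart t ->
    exists j : 'I_l, bstart j < z < bstart j.+1 by move/(_ l (leqnn l) zl).
elim => [|t IH] tl; first by rewrite bstart0 ltNge z_ge0.
have [zt _|tz zt1] := ltP z (bstart t); first exact: IH (ltnW tl) zt.
by exists (Ordinal tl); rewrite zt1 andbT lt_def tz z_neq // ltnW.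
Qed.

Variable T : R -> R.
Hypothesis T_branches : condition1 p ns T.
Hypothesis branches_cover : \sum_(j < l) P ^- ns j = 1.
Variable M : nat.
Hypothesis ns_leM : forall j, (ns j <= M)%N.

Lemma T_branch (j : 'I_l) z : bstart j < z < bstart j.+1 ->
  T z = P ^+ ns j * (z - bstart j).
Proof. by move=> zj; apply: T_branches; rewrite -bstartS. Qed.

Lemma T_branch_lt1 (j : 'I_l) z : bstart j < z < bstart j.+1 -> T z < 1.
Proof.
move=> /[dup] /andP[_ zj] /T_branch ->.
rewrite -[X in _ < X](mulfV (lt0r_neq0 (natpX_gt0 (ns j)))).
by rewrite ltr_pM2l ?natpX_gt0 // ltrBlDl -bstartS.
Qed.

(* exceptional set of [T @^-1` Y] when [F] is that of [Y] *)
Definition pre_exceptions (F : seq R) : seq R :=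
  [seq bstart t | t <- iota 0 l.+1] ++
  [seq bstart j + y * P ^- ns j | j : 'I_l <- enum 'I_l, y : R <- F].

Lemma bstart_in_exceptions F t : (t <= l)%N -> bstart t \in pre_exceptions F.
Proof. by move=> tl; rewrite mem_cat map_f // mem_iota add0n ltnS tl. Qed.

Lemma T_notin_exceptions F (j : 'I_l) z : bstart j < z < bstart j.+1 ->
  z \notin pre_exceptions F -> T z \notin F.
Proof.
move=> zj; apply: contra => TzF; rewrite mem_cat; apply/orP; right.
apply/allpairsP; exists (j, T z); rewrite mem_enum TzF (T_branch zj); split=> //=.
by rewrite mulrAC mulfV ?mul1r ?subrKC // gt_eqF ?natpX_gt0.
Qed.

Lemma branch_of F z : 0 <= z -> z < 1 -> z \notin pre_exceptions F ->
  exists j : 'I_l, bstart j < z < bstart j.+1.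
Proof.
move=> z_ge0 z1 zF; apply: bstart_between; rewrite ?bstart_total ?branches_cover //.
by move=> t tl; apply: contraNneq zF => ->; apply: bstart_in_exceptions.
Qed.

Lemma in_cell_same_branch Q c z w (j : 'I_l) : (forall i, ns i <= Q)%N ->
  in_cell Q c z -> in_cell Q c w -> bstart j < z < bstart j.+1 ->
  bstart j <= w < bstart j.+1.
Proof.
move=> nsQ /andP[cz zc] /andP[cw wc] /andP[jz zj]; have PQ := natpX_gt0 Q.
rewrite -(ler_pM2r PQ) -(ltr_pM2r PQ) !bstart_nat //.
rewrite -(ltr_pM2r PQ) bstart_nat // in jz.
rewrite -(ltr_pM2r PQ) bstart_nat // in zj.
apply/andP; split.
  by apply: le_trans cw; rewrite ler_nat -ltnS -(ltr_nat R) (lt_trans jz zc).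
by apply: lt_le_trans wc _; rewrite ler_nat -(ltr_nat R) (le_lt_trans cz zj).
Qed.

Lemma cell_invariant_preimage q Y F : cell_invariant q Y F ->
  cell_invariant (q + M) (T @^-1` Y) (pre_exceptions F).
Proof.
move=> Yinv c z w zc wc z1 zF wF; set Q := (q + M)%N.
have nsQ i : (ns i <= Q)%N by rewrite (leq_trans (ns_leM i)) ?leq_addl.
have [j zj] := branch_of (in_cell_ge0 zc) z1 zF.
have /andP[jw wj] := in_cell_same_branch nsQ zc wc zj.
have {}jw : bstart j < w.
  rewrite lt_def jw andbT; apply: contraNneq wF => ->.
  exact/bstart_in_exceptions/ltnW.
have {jw}wj : bstart j < w < bstart j.+1 by rewrite jw.
have qQ : (q <= Q - ns j)%N by rewrite leq_subRL ?nsQ // addnC leq_add2l.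
have cell_image u : bstart j <= u -> in_cell Q c u ->
    in_cell q ((c - \sum_(i < l | (i < j)%N) p ^ (Q - ns i)) %/ p ^ (Q - ns j - q))
      (P ^+ ns j * (u - bstart j)).
  by move=> ju /(in_cell_affine (nsQ j) (bstart_nat _ nsQ) ju); apply: in_cell_coarsen.
have [/andP[/ltW jz _] /andP[/ltW jw' _]] := (zj, wj).
rewrite /preimage /= (T_branch zj) (T_branch wj).
apply: (Yinv _ _ _ (cell_image z jz zc) (cell_image w jw' wc)).
- by rewrite -(T_branch zj) (T_branch_lt1 zj).
- by rewrite -(T_branch zj) (T_notin_exceptions zj).
- by rewrite -(T_branch wj) (T_notin_exceptions wj).
Qed.

Lemma lenR_EcellI_preimage q Y F k (i j : 'I_(p ^ k)) :
  cell_invariant q Y F -> (q + M <= k)%N ->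
  lenR (Ecell j `&` T @^-1` Ecell i) != 0 ->
  lenR (Ecell i `&` Y) = lenR (Ecell j `&` T @^-1` Y).
Proof.
move=> Yinv qMk ji; set a := i%:R / P ^+ k; set b := i.+1%:R / P ^+ k.
have Yinv' : cell_invariant q Y [:: a, b & F].
  by apply: cell_invariantW Yinv => u uF; rewrite !in_cons uF !orbT.
have [y [yj yF Tyi]] := lenR_itvI_witness (pre_exceptions [:: a, b & F]) ji.
have [j' yj'] := branch_of (in_cell_ge0 (in_cell_itv yj)) (Ecell_interior_lt1 yj) yF.
move: (T_notin_exceptions yj' yF); rewrite !in_cons !negb_or => /and3P[Tya Tyb TyF].
have Tyi' : a < T y < b.
  by move: Tyi; rewrite /preimage /Ecell /= in_itv /= !lt_def Tya eq_sym Tyb => ->.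
rewrite (lenR_EcellI_invariant Yinv _ Tyi' TyF) ?(leq_trans _ qMk) ?leq_addr //.
by rewrite (lenR_EcellI_invariant (cell_invariant_preimage Yinv') qMk yj yF).
Qed.

Section Quantization.
Variables (k : nat) (U : 'M[R[i]]_(p ^ k)).
Hypothesis U_quantizes : is_quantization p k T U.
Local Notation Ustar := ((map_mx conjc U)^T).

Lemma quantization_support (i j : 'I_(p ^ k)) :
  U i j != 0 -> lenR (Ecell j `&` T @^-1` Ecell i) != 0.
Proof.
apply: contraNneq => ji0; have := U_quantizes.2 i j.
by rewrite /Bmat ji0 mul0r => /esym/eqP; rewrite expf_eq0 /= normr_eq0.
Qed.

Lemma Pop_conj q Y F : cell_invariant q Y F -> (q + M <= k)%N ->
  Ustar *m Pop p k Y *m U = Pop p k (T @^-1` Y).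
Proof.
move=> Yinv qMk; rewrite /Pop; apply: (unitary_conj_diag_mx U_quantizes.1).
move=> i j /quantization_support ji.
by rewrite (lenR_EcellI_preimage Yinv qMk ji) !lenR_Ecell.
Qed.

Lemma Pop_conjX n q Y F : cell_invariant q Y F -> (q + n * M <= k)%N ->
  Ustar ^+ n *m Pop p k Y *m U ^+ n = Pop p k (iter n T @^-1` Y).
Proof.
elim: n q Y F => [|n IH] q Y F Yinv qnMk; first by rewrite !expr0 mul1mx mulmx1.
have qMk : (q + M <= k)%N by rewrite (leq_trans _ qnMk) // leq_add2l mulSn leq_addr.
rewrite exprSr exprS -!mulmxE !mulmxA -(mulmxA (Ustar ^+ n) Ustar) -(mulmxA (Ustar ^+ n)).
rewrite (Pop_conj Yinv qMk); apply: IH (cell_invariant_preimage Yinv) _.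
by rewrite -addnA -mulSn.
Qed.

End Quantization.
End Branches.
End PadicCells.

Lemma bigmax_expn_arg (p l : nat) (ns : 'I_l -> nat) : (1 < p)%N -> (0 < l)%N ->
  exists2 j, (\max_(i < l) p ^ ns i = p ^ ns j)%N & forall i, (ns i <= ns j)%N.
Proof.
move=> p_gt1 l_gt0; set j := [arg max_(i > Ordinal l_gt0) (p ^ ns i)%N].
have max_j := @bigop.bigmax_eq_arg _ (Ordinal l_gt0) xpredT (fun i => p ^ ns i)%N isT.
exists j => // i; rewrite -(leq_exp2l _ _ p_gt1) -max_j.
exact: (@leq_bigmax_cond _ xpredT (fun i => p ^ ns i)%N i).
Qed.

Lemma floor_ln_ratio_le (R : realType) (p k M a : nat) : (1 < p)%N -> (0 < M)%N ->
  (a%:Z <= Num.floor (ln ((p ^ k)%:R : R) / ln ((p ^ M)%:R)))%R -> (a * M <= k)%N.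
Proof.
move=> p_gt1 M_gt0; have lnp_gt0 : 0 < ln (p%:R : R) by rewrite ln_gt0 // ltr1n.
have p_gt0 : 0 < p%:R :> R by rewrite ltr0n ltnW.
rewrite floor_ge_int !natrX !lnXn //.
rewrite -[ln _ *+ k]mulr_natr -[ln _ *+ M]mulr_natr.
by rewrite ler_pdivlMr ?mulr_gt0 ?ltr0n // mulrCA ler_pM2l // -natrM ler_nat.
Qed.

Theorem corollary1 (R : realType) (p l : nat) (ns : 'I_l -> nat) (T : R -> R)
    (k : nat) (U : 'M[R[i]]_(p ^ k)) (x : seq 'I_p) (n : nat) :
  (2 <= p)%N ->
  (forall j, (1 <= ns j)%N) ->
  \sum_(j < l) (p%:R ^- ns j : R) = 1 ->
  condition1 p ns T ->
  is_quantization p k T U ->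
  ((n + size x)%:Z <= nE R p k ns)%R ->
  invmx (U ^+ n) *m Pop p k (cylinder p x) *m U ^+ n
    = Pop p k ((iter n T) @^-1` cylinder p x).
Proof.
move=> p_gt1 ns_gt0 cover T_branches U_quantizes n_le_nE.
have l_gt0 : (0 < l)%N.
  rewrite lt0n; apply/eqP => l0; move/eqP: cover.
  rewrite big1 1?eq_sym ?oner_eq0 // => i.
  by have := ltn_ord i; rewrite [X in (_ < X)%N]l0.
have [j max_j ns_le] := bigmax_expn_arg ns p_gt1 l_gt0.
have size_nM : (size x + n * ns j <= k)%N.
  move: n_le_nE; rewrite /nE max_j => /(floor_ln_ratio_le p_gt1 (ns_gt0 j)).
  by apply: leq_trans; rewrite mulnDl addnC leq_add2l leq_pmulr.
rewrite (invmx_unitaryX U_quantizes.1).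
exact (Pop_conjX p_gt1 T_branches cover ns_le U_quantizes
  (@cylinder_cell_invariant R p p_gt1 x) size_nM).
Qed.
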